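(* Every graph $G$ contains a bipartite subgraph $H$ such that $$\kappa(H) \ge \max\{d(G)/4,\ (\chi(G)-1)/8\}.$$
   Context: Graphs are finite and simple; $\kappa$ is vertex connectivity, $\chi$ chromatic number, and $d(G)=|E(G)|/|V(G)|$ the density of a non-null graph $G$. *)

(* A finite simple graph on a finType V is a symmetric,
   irreflexive relation e : rel V (vertex set = all of V). *)
From mathcomp Require Import all_boot all_order all_algebra.
Set Implicit Arguments. Unset Strict Implicit. Unset Printing Implicit Defensive.
Import Order.TTheory GRing.Theory Num.Theory.

Section Graphs.
Variable V : finType.

Definition nedges (e : rel V) : nat :=
  #|[set [set x; y] | x in V, y in V & e x y]|.

Definition density (e : rel V) : rat := ((nedges e)%:R / (#|V|)%:R)%R.

Definition colorable (e : rel V) (k : nat) : bool :=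
  [exists f : {ffun V -> 'I_k}, [forall x, forall y, e x y ==> (f x != f y)]].

(* chromatic number: least k admitting a proper k-colouring
   (k = #|V| always works) *)
Definition chi (e : rel V) : nat :=
  \big[minn/#|V|]_(k < #|V|.+1 | colorable e k) k.

Definition connected_on (h : rel V) (T : {set V}) : bool :=
  [forall x in T, forall y in T,
     connect [rel u v | [&& h u v, u \in T & v \in T]] x y].

Definition k_connected (S : {set V}) (h : rel V) (k : nat) : bool :=
  (k < #|S|) &&
  [forall X : {set V}, ((X \subset S) && (#|X| < k)) ==> connected_on h (S :\: X)].

Definition kappa (S : {set V}) (h : rel V) : nat :=
  \max_(k < #|S|.+1 | k_connected S h k) k.

Definition is_subgraph (e : rel V) (S : {set V}) (h : rel V) : Prop :=
  symmetric h /\ forall x y, h x y -> [&& x \in S, y \in S & e x y].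

Definition bipartite (S : {set V}) (h : rel V) : Prop :=
  exists A : {set V}, A \subset S /\
    forall x y, x \in S -> y \in S -> h x y -> (x \in A) != (y \in A).

End Graphs.

From mathcomp Require Import all_boot all_order all_algebra.
From mathcomp Require Import zify ring.
Set Implicit Arguments. Unset Strict Implicit. Unset Printing Implicit Defensive.
Import Order.TTheory GRing.Theory Num.Theory.

(* Mader's argument: if |S| >= 2k and G[S] has more than 2k(|S| - k) edges,
   then a vertex-minimal such S induces a (k+1)-connected graph, since deleting
   a vertex of degree <= 2k, or splitting S along a separator of at most k
   vertices, would produce a smaller such set.  A maximal cut keeps at least
   half of the edges in a bipartite spanning subgraph, so every graph of
   average degree d has a bipartite subgraph of connectivity at least d/8.
   Apply this to G (average degree 2d(G)) and to a subgraph of minimum degree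
   at least chi(G) - 1, which exists because a graph all of whose subgraphs
   have a vertex of degree < c is greedily c-colourable. *)

Section Subgraphs.
Variable V : finType.
Implicit Types (h : rel V) (A C S T W X : {set V}) (v : V).

Definition arcs h S : {set V * V} :=
  [set p | [&& p.1 \in S, p.2 \in S & h p.1 p.2]].
Definition narcs h S := #|arcs h S|.
Definition nbhd h S v : {set V} := [set w in S | h v w].
Definition induced h S : rel V := fun x y => [&& h x y, x \in S & y \in S].

Lemma induced_sym h S : symmetric h -> symmetric (induced h S).
Proof.
by move=> h_sym x y; rewrite /induced h_sym; case: (x \in S); case: (y \in S); rewrite ?andbF.
Qed.

Lemma eq_narcs h h' S : {in S &, h =2 h'} -> narcs h S = narcs h' S.
Proof.
move=> eq_h; apply: eq_card => -[x y]; rewrite !inE /=.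
by case/boolP: (x \in S) => //= xS; case/boolP: (y \in S) => //= yS; rewrite eq_h.
Qed.

Lemma narcs_le_sq h S : narcs h S <= #|S| * #|S|.
Proof.
rewrite -cardsX; apply/subset_leq_card/subsetP => p; rewrite !inE.
by case/and3P => -> ->.
Qed.

Lemma narcs_sum_nbhd h S : narcs h S = \sum_(x in S) #|nbhd h S x|.
Proof.
rewrite /narcs -sum1_card.
transitivity (\sum_(x in S) \sum_(y | (y \in S) && h x y) 1).
  by rewrite pair_big_dep; apply: eq_bigl => -[x y]; rewrite !inE.
by apply: eq_bigr => x _; rewrite sum1dep_card; apply: eq_card => y; rewrite !inE.
Qed.

Lemma narcs_le_split h S S1 S2 :
    {in S &, forall x y, h x y -> (x \in S1) && (y \in S1) || (x \in S2) && (y \in S2)} ->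
  narcs h S <= narcs h S1 + narcs h S2.
Proof.
move=> split_h; apply: leq_trans (leq_card_setU (arcs h S1) (arcs h S2)).
apply/subset_leq_card/subsetP => -[x y]; rewrite !inE /= => /and3P[xS yS hxy].
by case/orP: (split_h x y xS yS hxy) => /andP[-> ->]; rewrite hxy ?orbT.
Qed.

Lemma narcs_ge_min_deg h W c :
  (forall v, v \in W -> c <= #|nbhd h W v|) -> c * #|W| <= narcs h W.
Proof.
by move=> deg; rewrite narcs_sum_nbhd mulnC -sum_nat_const; apply: leq_sum.
Qed.

Section SymmetricIrreflexive.
Variable h : rel V.
Hypotheses (h_sym : symmetric h) (h_irr : irreflexive h).

Lemma nbhd_setD1 S v : nbhd h (S :\ v) v = nbhd h S v.
Proof.
by apply/setP => w; rewrite !inE; case: (eqVneq w v) => [->|]; rewrite ?h_irr ?andbF.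
Qed.

Lemma card_nbhd_lt S W v :
  v \in W -> nbhd h S v \subset W -> #|nbhd h S v| < #|W|.
Proof.
move=> vW sub; apply/proper_card/properP; split=> //.
by exists v => //; rewrite inE h_irr andbF.
Qed.

Lemma narcs_setU1 S v :
  v \notin S -> narcs h (v |: S) = narcs h S + 2 * #|nbhd h S v|.
Proof.
move=> vNS; rewrite !narcs_sum_nbhd big_setU1 //=.
rewrite -nbhd_setD1 setU1K //.
have nbhdU1 x : #|nbhd h (v |: S) x| = h x v + #|nbhd h S x|.
  have -> : nbhd h (v |: S) x = if h x v then v |: nbhd h S x else nbhd h S x.
    case hxv: (h x v); apply/setP => w; rewrite !inE;
    by case: (eqVneq w v) => [->|]; rewrite ?hxv ?andbT ?andbF ?orbT.
  by case: (h x v); rewrite ?cardsU1 ?inE ?(negbTE vNS).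
under eq_bigr do rewrite nbhdU1.
rewrite big_split /=.
have -> : \sum_(x in S) (h x v : nat) = #|nbhd h S v|.
  rewrite -sum1_card [LHS]big_mkcond [RHS]big_mkcond /=.
  by apply: eq_bigr => x _; rewrite inE h_sym; case: (x \in S); case: (h v x).
lia.
Qed.

Lemma narcs_le_separation S X C :
    {in C & S, forall u w, h u w -> (w \in C) || (w \in X)} ->
  narcs h S <= narcs h (C :|: X) + narcs h (S :\: C).
Proof.
move=> C_sep; apply: narcs_le_split => u w uS wS huw; rewrite !inE uS wS /=.
case/boolP: (u \in C) => uC /=; first by rewrite (C_sep u w uC wS huw).
case/boolP: (w \in C) => wC /=; rewrite ?orbT ?andbT ?orbF //.
rewrite h_sym in huw; have /orP[|//] := C_sep w u wC uS huw.
by rewrite (negbTE uC).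
Qed.

End SymmetricIrreflexive.

Lemma card_separation S X C :
  C \subset S :\: X -> #|C :|: X| + #|S :\: C| = #|S| + #|X|.
Proof.
move=> CSX; have CS : C \subset S := subset_trans CSX (subsetDl S X).
have CX : [disjoint C & X] by rewrite disjoints_subset (subset_trans CSX) // setDE subsetIr.
rewrite (cardsU C X) (disjoint_setI0 CX) cards0 subn0 cardsD (setIidPr CS).
by rewrite addnAC subnKC ?subset_leq_card.
Qed.

Lemma connected_on_induced h S T :
  T \subset S -> connected_on (induced h S) T = connected_on h T.
Proof.
move=> TS; apply: eq_forallb_in => x _; apply: eq_forallb_in => y _.
apply: eq_connect => u w /=; rewrite /induced.
case/boolP: (u \in T) => uT; case/boolP: (w \in T) => wT; rewrite ?andbF //.
by rewrite !(subsetP TS) ?andbT.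
Qed.

Lemma disconnected_split h T : ~~ connected_on h T ->
  exists (C : {set V}) x y, [/\ x \in C, y \in T :\: C, C \subset T &
    forall u w, u \in C -> w \in T -> h u w -> w \in C].
Proof.
case/forall_inPn => x xT /forall_inPn[y yT nxy].
set R := [rel u v | [&& h u v, u \in T & v \in T]] in nxy.
have CT : [set z | connect R x z] \subset T.
  apply/subsetP => z; rewrite inE => /connectP[p pth ->].
  by elim: p (x) xT pth => [|a p IH] b bT //= /andP[/and3P[_ _ aT]]; apply: IH.
exists [set z | connect R x z], x, y; split=> //.
- by rewrite inE connect0.
- by rewrite !inE nxy.
move=> u w uC wT huw; move: (uC); rewrite !inE => xu.
by apply: connect_trans xu (connect1 _); rewrite /= huw wT (subsetP CT).
Qed.

Definition cut h A : rel V := fun x y => h x y && ((x \in A) != (y \in A)).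

Lemma cut_sym h A : symmetric h -> symmetric (cut h A).
Proof. by move=> h_sym x y; rewrite /cut h_sym eq_sym. Qed.

Lemma cut_irr h A : irreflexive (cut h A).
Proof. by move=> x; rewrite /cut eqxx andbF. Qed.

Lemma exists_large_cut h W : symmetric h -> irreflexive h ->
  exists A, narcs h W <= 2 * narcs (cut h A) W.
Proof.
move=> h_sym h_irr; have [n] := ubnP #|W|; elim: n W => // n IH W.
case: (set_0Vmem W) => [-> _ | [v vW] Wn].
  by exists set0; have := narcs_le_sq h set0; rewrite cards0 leqn0 => /eqP ->.
set W' := W :\ v; have vW' : v \notin W' by rewrite setD11.
have [A' cutA'] : exists A', narcs h W' <= 2 * narcs (cut h A') W'.
  by apply: IH; rewrite (cardsD1 v W) vW in Wn.
set N := nbhd h W' v; set more_in_A' := #|N :\: A'| < #|N :&: A'|.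
(* v joins the side of A' containing fewer of its neighbours *)
pose A := if more_in_A' then A' :\ v else v |: A'.
have cut_agree : narcs (cut h A) W' = narcs (cut h A') W'.
  apply: eq_narcs => x y; rewrite !inE => /andP[xv _] /andP[yv _].
  by rewrite /cut /A; case: ifP; rewrite !inE (negbTE xv) (negbTE yv).
have cross : #|N| <= 2 * #|nbhd (cut h A) W' v|.
  have -> : nbhd (cut h A) W' v = if more_in_A' then N :&: A' else N :\: A'.
    apply/setP => w; rewrite /A /cut /N; case: ifP => _; rewrite !inE eqxx /=;
    by case: (w == v); case: (w \in W); case: (h v w); case: (w \in A').
  have := cardsID A' N; rewrite /more_in_A'; case: ltnP; lia.
exists A; rewrite -(setD1K vW) (narcs_setU1 h_sym h_irr vW').
rewrite (narcs_setU1 (cut_sym A h_sym) (cut_irr h A) vW') cut_agree -/W' -/N; lia.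
Qed.

Section Mader.
Variables (h : rel V) (k : nat).
Hypotheses (h_sym : symmetric h) (h_irr : irreflexive h).

(* As narcs counts every edge twice, this is Mader's condition
   |S| >= 2k and |E(G[S])| > 2k(|S| - k). *)
Definition dense S := (2 * k <= #|S|) && (4 * k * (#|S| - k) < narcs h S).

Section MinimalDense.
Variable S : {set V}.
Hypotheses (S_dense : dense S) (S_min : forall S', dense S' -> #|S| <= #|S'|).

Lemma min_dense_large : 2 * k < #|S|.
Proof.
case/andP: S_dense => S_ge S_narcs; rewrite ltn_neqAle S_ge andbT.
by apply/eqP => Sk; have := narcs_le_sq h S; rewrite -Sk in S_narcs *; nia.
Qed.

Lemma min_dense_min_deg v : v \in S -> 2 * k < #|nbhd h S v|.
Proof.
move=> vS; rewrite ltnNge; apply/negP => low_deg.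
have large := min_dense_large; case/andP: S_dense => _ S_narcs.
have narcs_S : narcs h S = narcs h (S :\ v) + 2 * #|nbhd h S v|.
  by rewrite -{1}(setD1K vS) narcs_setU1 ?setD11 ?nbhd_setD1.
have : dense (S :\ v).
  move: S_narcs large; rewrite /dense narcs_S (cardsD1 v S) vS; nia.
by move/S_min; rewrite (cardsD1 v S) vS; lia.
Qed.

Lemma min_dense_piece S' v : S' \proper S -> v \in S' -> nbhd h S v \subset S' ->
  2 * k < #|S'| /\ narcs h S' <= 4 * k * (#|S'| - k).
Proof.
move=> S'S vS' nbhd_sub.
have S'_large : 2 * k < #|S'|.
  have := card_nbhd_lt h_irr vS' nbhd_sub.
  by have := min_dense_min_deg (subsetP (proper_sub S'S) v vS'); lia.
split=> //; have : ~~ dense S' by apply/negP => /S_min; rewrite leqNgt proper_card.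
by rewrite /dense negb_and -!leqNgt ltnW.
Qed.

Lemma min_dense_connected_on X :
  X \subset S -> #|X| <= k -> connected_on h (S :\: X).
Proof.
move=> XS Xk; apply/negPn/negP => /disconnected_split[C [x [y [xC yTC CT C_closed]]]].
have CS : C \subset S := subset_trans CT (subsetDl S X).
have xS : x \in S := subsetP CS x xC.
have [yC yS yX] : [/\ y \notin C, y \in S & y \notin X].
  by move: yTC; rewrite !inE => /and3P[-> -> ->].
have C_sep : {in C & S, forall u w, h u w -> (w \in C) || (w \in X)}.
  move=> u w uC wS huw; case/boolP: (w \in X) => wX; rewrite ?orbT // orbF.
  by apply: (C_closed u) => //; rewrite inE wX wS.
have [large1 sparse1] :
    2 * k < #|C :|: X| /\ narcs h (C :|: X) <= 4 * k * (#|C :|: X| - k).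
  apply: (@min_dense_piece _ x); rewrite ?inE ?xC //.
    by apply/properP; split; [rewrite subUset CS | exists y]; rewrite // !inE (negbTE yC).
  by apply/subsetP => w; rewrite !inE => /andP[wS hxw]; exact: (C_sep x w xC wS hxw).
have [large2 sparse2] :
    2 * k < #|S :\: C| /\ narcs h (S :\: C) <= 4 * k * (#|S :\: C| - k).
  apply: (@min_dense_piece _ y); rewrite ?inE ?yC ?yS //.
    by apply/properP; split; [apply: subsetDl | exists x]; rewrite // !inE xC.
  apply/subsetP => w; rewrite !inE => /andP[wS hyw]; rewrite wS andbT.
  apply: contraNN yC => wC; rewrite h_sym in hyw.
  by have /orP[//|] := C_sep w y wC yS hyw; rewrite (negbTE yX).
have S_sparse : narcs h S <= 4 * k * (#|S| - k).
  apply: leq_trans (narcs_le_separation h_sym C_sep) _.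
  apply: leq_trans (leq_add sparse1 sparse2) _; rewrite -mulnDr leq_mul //.
  by have := card_separation CT; clear -Xk large1 large2; lia.
by case/andP: S_dense => _; rewrite ltnNge S_sparse.
Qed.

Lemma min_dense_k_connected : k_connected S (induced h S) k.+1.
Proof.
apply/andP; split.
  have [v vS] : exists v, v \in S.
    by apply/set0Pn; rewrite -card_gt0; have := min_dense_large; lia.
  have nbhd_sub : nbhd h S v \subset S by apply/subsetP => w; rewrite inE => /andP[].
  by have := card_nbhd_lt h_irr vS nbhd_sub; have := min_dense_min_deg vS; lia.
apply/forallP => X; apply/implyP => /andP[XS Xk].
by rewrite connected_on_induced ?subsetDl // min_dense_connected_on.
Qed.

End MinimalDense.

Lemma exists_k_connected_subgraph S0 : dense S0 -> exists S, k_connected S (induced h S) k.+1.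
Proof.
move=> S0_dense; case: (arg_minnP (fun S => #|S|) S0_dense) => S S_dense S_min.
by exists S; apply: min_dense_k_connected.
Qed.

End Mader.

Lemma k_connected_le_kappa S h j : k_connected S h j -> j <= kappa S h.
Proof.
move=> conn; have /andP[jS _] := conn.
exact: (leq_bigmax_cond (Ordinal (ltnW jS : j < #|S|.+1)) conn).
Qed.

Lemma exists_subgraph_kappa_ge h W : symmetric h -> irreflexive h -> W != set0 ->
  exists2 S, S != set0 & narcs h W <= 4 * #|W| * kappa S (induced h S).
Proof.
move=> h_sym h_irr W0; have W_gt0 : 0 < #|W| by rewrite card_gt0.
case: (posnP (narcs h W)) => [-> | narcs_gt0]; first by exists W.
set k := narcs h W %/ (4 * #|W|).
have k_le : k * (4 * #|W|) <= narcs h W by apply: leq_divM.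
have k_gt : narcs h W < k.+1 * (4 * #|W|) by apply: ltn_ceil; rewrite muln_gt0.
have W_dense : dense h k W.
  have := narcs_le_sq h W; rewrite /dense; case: (posnP k) => [->|k_gt0]; nia.
have [S conn] := exists_k_connected_subgraph h_sym h_irr W_dense.
have /andP[S_large _] := conn; have := k_connected_le_kappa conn.
by exists S; [rewrite -card_gt0; lia | nia].
Qed.

Lemma exists_bipartite_subgraph_kappa_ge e W : symmetric e -> irreflexive e -> W != set0 ->
  exists S h, [/\ S != set0, is_subgraph e S h, bipartite S h &
                 narcs e W <= 8 * #|W| * kappa S h].
Proof.
move=> e_sym e_irr W0; have [A large_cut] := exists_large_cut W e_sym e_irr.
have [S S0 kappa_ge] := exists_subgraph_kappa_ge (cut_sym A e_sym) (cut_irr e A) W0.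
exists S, (induced (cut e A) S); split=> //.
- by split=> [|x y /and3P[/andP[-> _] -> ->]]; first exact/induced_sym/cut_sym.
- exists (S :&: A); split=> [|x y xS yS /and3P[/andP[_]]]; first exact: subsetIl.
  by rewrite !inE xS yS.
- nia.
Qed.

Section Colouring.
Variable e : rel V.
Hypotheses (e_sym : symmetric e) (e_irr : irreflexive e).

Lemma degenerate_colorable c : 0 < c ->
    (forall W, W != set0 -> exists2 v, v \in W & #|nbhd e W v| < c) ->
  colorable e c.
Proof.
move=> c_gt0 degenerate.
suff colorable_on W : exists f : {ffun V -> 'I_c},
    forall x y, x \in W -> y \in W -> e x y -> f x != f y.
  have [f f_proper] := colorable_on [set: V].
  apply/existsP; exists f; apply/forallP => x; apply/forallP => y.
  by apply/implyP; apply: f_proper.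
have [n] := ubnP #|W|; elim: n W => // n IH W Wn.
have [-> | W0] := eqVneq W set0.
  by exists [ffun=> Ordinal c_gt0] => x; rewrite inE.
have [v vW low_deg] := degenerate W W0.
have /IH [f f_proper] : #|W :\ v| < n by rewrite (cardsD1 v W) vW in Wn.
have [col colN] : exists col, col \notin f @: nbhd e W v.
  apply/existsP; rewrite -negb_forall; apply: contraTN low_deg => /forallP all_used.
  have used : [set: 'I_c] \subset f @: nbhd e W v by apply/subsetP => i _; apply: all_used.
  have := subset_leq_card used; rewrite cardsT card_ord -leqNgt => /leq_trans; apply.
  exact: leq_imset_card.
exists [ffun x => if x == v then col else f x] => x y xW yW exy; rewrite !ffunE.
have nbhd_v z : z \in W -> e v z -> f z \in f @: nbhd e W v.
  by move=> zW evz; apply: imset_f; rewrite inE zW.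
case: (eqVneq x v) => [exv|xv]; case: (eqVneq y v) => [eyv|yv].
- by move: exy; rewrite exv eyv e_irr.
- by apply: contraNneq colN => ->; apply: nbhd_v; rewrite // -exv.
- by apply: contraNneq colN => <-; apply: nbhd_v; rewrite // -eyv e_sym.
- by apply: f_proper; rewrite // !inE ?xv ?yv.
Qed.

Lemma exists_min_degree_subgraph (v0 : V) c : ~~ colorable e c ->
  exists2 W, W != set0 & forall v, v \in W -> c <= #|nbhd e W v|.
Proof.
move=> not_col; case: (posnP c) => [-> | c_gt0].
  by exists [set: V] => //; apply/set0Pn; exists v0; rewrite inE.
suff /existsP[W /andP[W0 /forall_inP min_deg]] :
    [exists W : {set V}, (W != set0) && [forall v in W, c <= #|nbhd e W v|]].
  by exists W.
apply: contraNT not_col => /existsPn no_W; apply: degenerate_colorable => // W W0.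
have /forall_inPn[v vW] : ~~ [forall v in W, c <= #|nbhd e W v|].
  by have := no_W W; rewrite W0.
by rewrite -ltnNge; exists v.
Qed.

Lemma double_nedges_le : 2 * nedges e <= narcs e [set: V].
Proof.
pose ends (p : V * V) := [set p.1; p.2].
have edgesE : [set [set x; y] | x in V, y in V & e x y] = ends @: arcs e [set: V].
  apply/setP => s; apply/imset2P/imsetP => [[x y _] | [[x y]]].
    by rewrite inE => /andP[_ exy] ->; exists (x, y); rewrite ?inE.
  by rewrite !inE /= => exy ->; exists x y; rewrite ?inE.
rewrite /nedges edgesE /narcs -[#|arcs e _|]sum1_card (partition_big_imset ends) /=.
rewrite mulnC -sum_nat_const; apply: leq_sum => s /imsetP[[x y] xy_arc ->].
have xy_yx : (x, y) != (y, x).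
  by apply: contraTneq xy_arc => -[->]; rewrite !inE /= e_irr.
rewrite sum1dep_card -[2]/(true.+1) -xy_yx -cards2.
have exy : e x y by move: xy_arc; rewrite !inE.
apply/subset_leq_card/subsetP => p; rewrite !inE => /orP[] /eqP -> /=.
  by rewrite exy eqxx.
by rewrite e_sym exy /ends setUC eqxx.
Qed.

Lemma chi_le c : colorable e c -> chi e <= c.
Proof.
rewrite /chi -minEnat; case: (leqP c #|V|) => [cV col | /ltnW Vc _].
  pose i : 'I_#|V|.+1 := Ordinal (cV : c < #|V|.+1).
  exact: (@bigmin_le_cond _ nat _ _ i _ (fun k : 'I__ => k : nat) col).
by apply: leq_trans Vc; exact: (@bigmin_le_id _ nat).
Qed.

Lemma chi_pred_not_colorable (v0 : V) : ~~ colorable e (chi e).-1.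
Proof.
apply/negP => col; have := chi_le col.
case: (chi e) col => [|c] /= col; last by rewrite ltnn.
by case/existsP: col => f _; case: (f v0).
Qed.

End Colouring.

End Subgraphs.

Theorem corollary3p2 (V : finType) (e : rel V)
    (e_sym : symmetric e) (e_irr : irreflexive e) (V_nonnull : 0 < #|V|) :
  exists (S : {set V}) (h : rel V),
    [/\ S != set0, is_subgraph e S h, bipartite S h &
      (Num.max (density e / 4%:R) (((chi e)%:R - 1) / 8%:R) <= (kappa S h)%:R :> rat)%R].
Proof.
have [v0 _] := card_gt0P V_nonnull.
have kappa_bound (r : rat) W :
    W != set0 -> (r * (8 * #|W|)%:R <= (narcs e W)%:R)%R ->
  exists S h, [/\ S != set0, is_subgraph e S h, bipartite S h & (r <= (kappa S h)%:R)%R].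
  move=> W0 rW; have [S [h [S0 sub bip narcs_le]]] :=
    exists_bipartite_subgraph_kappa_ge e_sym e_irr W0.
  exists S, h; split=> //.
  rewrite -(@ler_pM2r _ (8 * #|W|)%:R) ?ltr0n ?muln_gt0 ?card_gt0 //.
  by apply: le_trans rW _; rewrite -natrM ler_nat mulnC.
case: (lerP (density e / 4%:R)%R (((chi e)%:R - 1) / 8%:R)%R) => [le_ab | lt_ba].
  have [W W0 min_deg] :=
    exists_min_degree_subgraph e_sym e_irr v0 (chi_pred_not_colorable e v0).
  apply: kappa_bound W0 _; apply: le_trans (_ : ((chi e).-1 * #|W|)%:R <= _)%R; last first.
    by rewrite ler_nat narcs_ge_min_deg.
  have chi_pred : ((chi e)%:R - 1 <= ((chi e).-1)%:R :> rat)%R.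
    by case: (chi e) => [|c] /=; rewrite ?sub0r ?oppr_le0 ?ler01 // -addn1 natrD addrK.
  by rewrite !natrM mulrA divfK ?pnatr_eq0 // ler_wpM2r.
apply: (kappa_bound _ [set: V]).
  by apply/set0Pn; exists v0; rewrite inE.
rewrite cardsT (_ : _ * _ = (2 * nedges e)%:R)%R ?ler_nat ?double_nedges_le //.
rewrite /density !natrM; field; by rewrite pnatr_eq0 -lt0n.
Qed.
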